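(* Let $b>1$, $p\ge1$ and $R\subseteq\{0,\ldots,p-1\}$ be such that $(p,R)$ is proper. Let $k$ be the greatest divisor of $p$ coprime with $b$. If two states $i,i'$ of $\mathcal{A}_{R,p}$ are Nerode-equivalent, then $i\equiv i'\pmod k$.
   Context: $A_b=\{0,\ldots,b-1\}$. $\mathcal{A}_{R,p}$ is the complete deterministic automaton over $A_b$ with states $\{0,\ldots,p-1\}$, initial state $0$, final states $R$, and transitions $n\xrightarrow{a}(nb+a)\bmod p$. The pair $(p,R)$ is proper if $p$ is the smallest period of the purely periodic set $R+p\mathbb{N}$, i.e. there is no $p'<p$, $p'\ge1$, and $R'\subseteq\{0,\ldots,p'-1\}$ with $R+p\mathbb{N}=R'+p'\mathbb{N}$. Two states $s,s'$ are Nerode-equivalent if for every word $u$, $s\cdot u$ is final iff $s'\cdot u$ is final, where $s\cdot u$ is the state reached from $s$ by reading $u$. *)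

From mathcomp Require Import all_boot.
Set Implicit Arguments. Unset Strict Implicit. Unset Printing Implicit Defensive.

(* Automaton A_{R,p} over the alphabet A_b = {0,...,b-1} (letters : 'I_b).
   States are the naturals 0..p-1; initial state 0; transitions
   n --a--> (n*b + a) mod p; final states: those in R : {set 'I_p}. *)

Definition trans (b p n : nat) (a : 'I_b) : nat := (n * b + a) %% p.

Definition run (b p s : nat) (u : seq 'I_b) : nat := foldl (trans p) s u.

Definition is_final (p : nat) (R : {set 'I_p}) (n : nat) : bool :=
  [exists i in R, val i == n].

Definition in_periodic (p : nat) (R : {set 'I_p}) (n : nat) : bool :=
  [exists i in R, val i == n %% p].

Definition proper_pair (p : nat) (R : {set 'I_p}) : Prop :=
  forall (p' : nat) (R' : {set 'I_p'}), 1 <= p' -> p' < p ->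
    ~ (forall n, in_periodic R n = in_periodic R' n).

Definition nerode_equiv (b p : nat) (R : {set 'I_p}) (s s' : nat) : Prop :=
  forall u : seq 'I_b, is_final R (run p s u) = is_final R (run p s' u).

(* Reading the p base-b digits of v from state s leads to (s b^p + v) mod p,
   and b^p >= p, so every residue is reachable after a common word length.
   Hence if i and i' are Nerode-equivalent, x |-> [x in R + pN] takes the same
   values at x + i b^p and x + i' b^p, which makes (i' - i) b^p mod p a period
   of R + pN.  Properness forces p to divide (i - i') b^p, and since k divides
   p and is coprime with b^p, k divides i - i'. *)

From mathcomp Require Import all_boot.

Set Implicit Arguments.
Unset Strict Implicit.
Unset Printing Implicit Defensive.

Definition has_period (T : Type) (f : nat -> T) (d : nat) : Prop :=
  forall x, f (x + d) = f x.

Section Periods.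

Variables (T : Type) (f : nat -> T).

Lemma has_periodM d c : has_period f d -> has_period f (c * d).
Proof.
move=> fd; elim: c => [|c IHc] x; first by rewrite mul0n addn0.
by rewrite mulSn addnA addnAC fd IHc.
Qed.

Lemma has_period_gcdn d e : 0 < e -> has_period f d -> has_period f e ->
  has_period f (gcdn d e).
Proof.
move=> e_gt0 fd fe x; have [a _ /dvdnP[c def_c]] := Bezoutl d e_gt0.
rewrite -(has_periodM a fd (x + _)) -addnA gcdnC def_c.
exact: has_periodM.
Qed.

Lemma has_period_mod d x : has_period f d -> f (x %% d) = f x.
Proof. by move=> fd; rewrite {2}(divn_eq x d) addnC has_periodM. Qed.

End Periods.

Lemma in_periodic_period p (R : {set 'I_p}) : has_period (in_periodic R) p.
Proof. by move=> x; rewrite /in_periodic modnDr. Qed.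

Lemma proper_pair_period p (R : {set 'I_p}) d : 0 < p -> proper_pair R ->
  has_period (in_periodic R) d -> p %| d.
Proof.
move=> p_gt0 properR Rd; set g := gcdn d p.
have Rg : has_period (in_periodic R) g.
  exact: has_period_gcdn p_gt0 Rd (in_periodic_period R).
have g_gt0 : 0 < g by rewrite gcdn_gt0 p_gt0 orbT.
suff -> : p = g by apply: dvdn_gcdl.
apply/eqP; rewrite eqn_leq (dvdn_leq p_gt0 (dvdn_gcdr d p)) andbT leqNgt.
apply/negP => g_lt_p.
apply: (properR g [set j : 'I_g | in_periodic R j]) => // n.
rewrite -(has_period_mod n Rg) /in_periodic.
apply/idP/existsP => [Rn|[j /andP[]]].
  by exists (Ordinal (ltn_pmod n g_gt0)); rewrite inE eqxx andbT.
by rewrite inE => Rj /eqP <-.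
Qed.

Lemma proper_pair_shift p (R : {set 'I_p}) a c : 0 < p -> proper_pair R ->
  (forall x, in_periodic R (x + a) = in_periodic R (x + c)) -> a = c %[mod p].
Proof.
case: p R => // p' R _ properR Rac.
(* c + p' a is c - a modulo p'.+1, without truncated subtraction. *)
have Rt : has_period (in_periodic R) (c + p' * a).
  move=> x; rewrite addnA addnAC -Rac -addnA -mulSnr mulnC.
  exact: (has_periodM a (in_periodic_period R) x).
have /dvdnP[q def_q] := proper_pair_period (ltn0Sn p') properR Rt.
apply/eqP; rewrite -(eqn_modDl (p' * a)) -mulSnr [p' * a + c]addnC def_q.
by rewrite modnMl modnMr.
Qed.

Lemma exists_run_digits b p n v : v < b ^ n ->
  exists u : seq 'I_b, forall s, s < p -> run p s u = (s * b ^ n + v) %% p.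
Proof.
elim: n v => [|n IHn] v v_lt.
  exists [::] => s s_lt; rewrite /run /= expn0 muln1.
  by move: v_lt; rewrite expn0 ltnS leqn0 => /eqP ->; rewrite addn0 modn_small.
have b_gt0 : 0 < b by move: v_lt; case: (b) => //; rewrite exp0n.
have [u Hu] : exists u : seq 'I_b,
    forall s, s < p -> run p s u = (s * b ^ n + v %/ b) %% p.
  by apply: IHn; rewrite ltn_divLR // -expnSr.
exists (rcons u (Ordinal (ltn_pmod v b_gt0))) => s s_lt.
rewrite /run -cats1 foldl_cat /= -/(run p s u) Hu // /trans /=.
rewrite -modnDml modnMml modnDml; congr (_ %% p).
by rewrite {3}(divn_eq v b) expnSr mulnDl mulnA addnA.
Qed.

Lemma nerode_equiv_shift b p (R : {set 'I_p}) i i' : 1 < b -> 0 < p ->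
  i < p -> i' < p -> nerode_equiv b R i i' ->
  forall x, in_periodic R (x + i * b ^ p) = in_periodic R (x + i' * b ^ p).
Proof.
move=> b_gt1 p_gt0 i_lt i'_lt eq_ii' x.
have x_lt : x %% p < b ^ p.
  exact: leq_trans (ltn_pmod x p_gt0) (ltnW (ltn_expl p b_gt1)).
have [u Hu] := exists_run_digits p x_lt.
move: (eq_ii' u); rewrite !Hu // /is_final /in_periodic.
by rewrite ![x + _]addnC !modnDmr.
Qed.

Lemma eqn_modM2r d m n q : coprime d q ->
  (m * q == n * q %[mod d]) = (m == n %[mod d]).
Proof.
move=> dq; wlog le_nm : m n / n <= m.
  move=> IH; case/orP: (leq_total n m) => /IH // le_mn.
  by rewrite eq_sym le_mn eq_sym.
by rewrite !eqn_mod_dvd ?leq_mul2r ?le_nm ?orbT // -mulnBl Gauss_dvdl.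
Qed.

Theorem proposition20 (b p : nat) (R : {set 'I_p}) (k : nat) (i i' : nat) :
  1 < b -> 1 <= p -> proper_pair R ->
  k %| p -> coprime k b ->
  (forall d, d %| p -> coprime d b -> d <= k) ->
  i < p -> i' < p ->
  nerode_equiv b R i i' ->
  i = i' %[mod k].
Proof.
move=> b_gt1 p_gt0 properR k_dvd_p k_coprime_b _ i_lt i'_lt eq_ii'.
have shift := nerode_equiv_shift b_gt1 p_gt0 i_lt i'_lt eq_ii'.
have eq_mod_p := proper_pair_shift p_gt0 properR shift.
apply/eqP; rewrite -(@eqn_modM2r _ _ _ (b ^ p)) ?coprimeXr //.
by rewrite -(modn_dvdm (i * b ^ p) k_dvd_p) eq_mod_p modn_dvdm.
Qed.
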